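(* Let $n \ge 2$ be even and $N\ge 1$ an integer. Let $\tau \in S_{N+3n-3}$ have size at most $N$. Then every permutation in $S_{N+3n-3}$ with the same cycle type as $\tau$ can be obtained from $\tau$ by successive conjugation by $n$-crossing permutations over $S_{N+3n-3}$; that is, it equals $g\tau g^{-1}$ for some $g$ that is a product of $n$-crossing permutations over $S_{N+3n-3}$.
   Context: For integers $2\le n\le m$ and $1 \le j \le m-n+1$, the $n$-crossing permutation $\pi_j\in S_m$ is $\pi_j=(j,\,j+n-1)(j+1,\,j+n-2)\cdots$, i.e. the involution sending $i \mapsto 2j+n-1-i$ for $j\le i\le j+n-1$ and fixing all other elements of $\{1,\dots,m\}$. The $n$-crossing permutations over $S_m$ are $\pi_1,\dots,\pi_{m-n+1}$. The size of a permutation is the number of points it does not fix (the number of distinct entries in its cycle notation after dropping $1$-cycles). *)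

From mathcomp Require Import all_boot all_fingroup.
Set Implicit Arguments. Unset Strict Implicit. Unset Printing Implicit Defensive.
Local Open Scope group_scope.

(* Points {1,...,m} are represented 0-indexed as 'I_m.+1 (we always have m >= 1
   in the application; here the ambient size is m.+1). *)

(* The n-crossing permutation with (0-indexed) start j, written, as in the
   paper, as the product of transpositions (j, j+n-1)(j+1, j+n-2)...,
   i.e. the involution i |-> 2j+n-1-i on [j, j+n-1], identity elsewhere.
   (The transpositions are disjoint, so their order is irrelevant.) *)
Definition crossing (m n j : nat) : {perm 'I_m.+1} :=
  \prod_(k < n./2) tperm (inord (j + k) : 'I_m.+1) (inord (j + n - 1 - k)).

Definition crossings (m n : nat) : {set {perm 'I_m.+1}} :=
  [set crossing m n j | j : 'I_m.+2 & j + n <= m.+1].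

(* Cycle type: the multiset of cycle lengths (including fixed points). *)
Definition cycle_type (T : finType) (s : {perm T}) : seq nat :=
  [seq #|X| | X : {set T} <- enum (porbits s)].

Definition same_cycle_type (T : finType) (s t : {perm T}) : bool :=
  perm_eq (cycle_type s) (cycle_type t).

Definition nonfix_size (T : finType) (s : {perm T}) : nat :=
  #|[set x | s x != x]|.

From mathcomp Require Import all_boot all_fingroup.
From mathcomp Require Import zify.
Set Implicit Arguments. Unset Strict Implicit. Unset Printing Implicit Defensive.
Local Open Scope group_scope.

(* Write r_j for the crossing with window [j, j+n-1] (points are 0-indexed).
   As n is even, (r_0 r_{n-1})^2 is the 3-cycle on 0, n-1 and 2n-2.  Conjugating
   a 3-cycle by a crossing whose window contains only one of its points moves that
   point by the reflection of the window; this yields every 3-cycle through 0 and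
   2n-2 inside [0, 2n-2], then every 3-cycle through 0 and 1, and these generate
   all 3-cycles, hence the alternating group.  Permutations of the same cycle type
   are conjugate, and since tau fixes two points the conjugating permutation can
   be made even by composing it with the transposition of those two points. *)

Section ThreeCycles.
Variable T : finType.
Implicit Types a b c x y z : T.

Definition cyc3 a b c : {perm T} := tperm a b * tperm b c.

Lemma cyc3V a b c : (cyc3 a b c)^-1 = cyc3 c b a.
Proof. by rewrite /cyc3 invMg !tpermV tpermC [tperm b a]tpermC. Qed.

Lemma cyc3J a b c (g : {perm T}) : cyc3 a b c ^ g = cyc3 (g a) (g b) (g c).
Proof. by rewrite /cyc3 conjMg !tpermJ. Qed.

Ltac tperm_cases :=
  apply/permP => z; rewrite ?permM !permE /=;
  repeat match goal with |- context [?u == ?v] =>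
    is_var u; is_var v; case: (u =P v) => [?|?]; subst => //= end.

Lemma cyc3_rot a b c : a != b -> b != c -> a != c -> cyc3 a b c = cyc3 b c a.
Proof. move=> /eqP ? /eqP ? /eqP ?; rewrite /cyc3; tperm_cases. Qed.

Lemma cyc3_pivot x y p q : [/\ x != y, x != p, x != q, y != p & y != q] -> p != q ->
  cyc3 x p q = cyc3 x y q * (cyc3 x y p)^-1.
Proof.
rewrite cyc3V => -[/eqP ? /eqP ? /eqP ? /eqP ? /eqP ?] /eqP ?.
by rewrite /cyc3; tperm_cases.
Qed.

Lemma cyc3_split x p q r : [/\ x != p, x != q & x != r] -> [/\ p != q, q != r & p != r] ->
  cyc3 p q r = cyc3 x p q * cyc3 x q r.
Proof.
by move=> [/eqP ? /eqP ? /eqP ?] [/eqP ? /eqP ? /eqP ?]; rewrite /cyc3; tperm_cases.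
Qed.

End ThreeCycles.

Section ThreeCyclesInGroup.
Variables (T : finType) (G : {group {perm T}}).
Implicit Types a b c d x y z : T.

Lemma cyc3_pivot_in (V : pred T) x y : x != y ->
    {in V, forall z, x != z -> y != z -> cyc3 x y z \in G} ->
  forall p q, p \in V -> q \in V -> x != p -> x != q -> p != q -> cyc3 x p q \in G.
Proof.
move=> xy xyG p q pV qV xp xq pq.
have [yp|yp] := eqVneq y p; first by subst p; apply: xyG.
have [yq|yq] := eqVneq y q.
  by subst q; rewrite -[cyc3 x p y]invgK cyc3V -cyc3_rot // groupV xyG // eq_sym.
by rewrite (cyc3_pivot (And5 xy xp xq yp yq)) // groupM ?groupV ?xyG.
Qed.

Lemma cyc3_star_in x y : x != y -> (forall z, x != z -> y != z -> cyc3 x y z \in G) ->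
  forall a b c, a != b -> b != c -> a != c -> cyc3 a b c \in G.
Proof.
move=> xy xyG; have xG := @cyc3_pivot_in predT x y xy (fun z _ => xyG z).
move=> a b c ab bc ac.
have [xa|xa] := eqVneq x a; first by subst a; apply: xG.
have [xb|xb] := eqVneq x b.
  by subst b; rewrite cyc3_rot // xG // eq_sym.
have [xc|xc] := eqVneq x c.
  by subst c; rewrite -cyc3_rot ?xG.
by rewrite (cyc3_split (And3 xa xb xc) (And3 ab bc ac)) groupM ?xG.
Qed.

Section AllThreeCycles.
Hypothesis cyc3G : forall a b c, a != b -> b != c -> a != c -> cyc3 a b c \in G.

Lemma mul_tperm_in a b c d : a != b -> c != d -> tperm a b * tperm c d \in G.
Proof.
have adjG x y z : x != y -> y != z -> tperm x y * tperm y z \in G.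
  move=> xy yz; have [<-|xz] := eqVneq x z; first by rewrite tpermC tperm2 group1.
  exact: cyc3G.
move=> ab cd; have [bc|bc] := eqVneq b c; first by subst c; apply: adjG.
have -> : tperm a b * tperm c d = tperm a b * tperm b c * (tperm b c * tperm c d).
  by rewrite !mulgA -(mulgA (tperm a b)) tperm2 mulg1.
by rewrite groupM ?adjG.
Qed.

Lemma even_perm_in h : ~~ odd_perm h -> h \in G.
Proof.
have [ts -> dts] := prod_tpermP h; rewrite odd_perm_prod //.
case: ts dts => [_ _|[x0 y0] ts dts]; first by rewrite big_nil group1.
set prod := fun us : seq (T * T) => \prod_(t <- us) tperm t.1 t.2.
have x0y0 : x0 != y0 by case/andP: dts.
(* Transpositions are multiplied in pairs, an odd prefix being paired with
   tperm x0 y0. *)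
suff parity us : all dpair us ->
    (if odd (size us) then tperm x0 y0 * prod us else prod us) \in G.
  by move=> /negbTE even_ts; have := parity _ dts; rewrite even_ts.
elim: us => [|[x y] us IH] /=; first by rewrite /prod big_nil group1.
rewrite /prod big_cons -/(prod us) => /andP[xy /IH]; case: odd => /= usG.
  by rewrite -[prod us](mulKg (tperm x0 y0)) tpermV mulgA groupM ?mul_tperm_in.
by rewrite mulgA groupM ?mul_tperm_in.
Qed.

End AllThreeCycles.
End ThreeCyclesInGroup.

Section Conjugacy.
Variable T : finType.
Implicit Types (s t p h : {perm T}) (A B : {set T}) (x y z : T).

Definition porbit_count s l B := #|[set z in B | #|porbit s z| == l]|.

Lemma porbitJ s h z : porbit (s ^ h) (h z) = h @: porbit s z.
Proof.
apply/setP => y; apply/porbitP/imsetP => [[i ->]|[w /porbitP[i ->] ->]].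
  by exists ((s ^+ i) z); [apply: mem_porbit | rewrite -conjXg permJ].
by exists i; rewrite -conjXg permJ.
Qed.

Lemma card_porbitJ s h z : #|porbit (s ^ h) (h z)| = #|porbit s z|.
Proof. by rewrite porbitJ card_imset //; apply: perm_inj. Qed.

Lemma porbit_countJ s h l : porbit_count (s ^ h) l setT = porbit_count s l setT.
Proof.
rewrite /porbit_count -[RHS](card_imset _ (@perm_inj _ h)); apply: eq_card => z.
by rewrite -[z](permKV h) mem_imset ?inE ?card_porbitJ //; apply: perm_inj.
Qed.

Lemma porbit_count_cycle_type s l :
  porbit_count s l setT = \sum_(c <- cycle_type s) c * (c == l).
Proof.
rewrite /cycle_type big_map big_enum /porbit_count -sum1_card.
rewrite (partition_big (porbit s) (mem (porbits s))) /=; last first.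
  by move=> z _; apply: imset_f.
apply: eq_bigr => _ /imsetP[x _ ->].
rewrite (eq_bigl (fun z => (#|porbit s x| == l) && (z \in porbit s x))); last first.
  move=> z; rewrite !inE /= eq_porbit_mem.
  case zx: (z \in porbit s x); rewrite ?andbF ?andbT //.
  by rewrite -eq_porbit_mem in zx; rewrite (eqP zx).
have [_|_] := eqVneq #|porbit s x| l; last by rewrite muln0 big_pred0.
by rewrite muln1 (eq_bigl (mem (porbit s x))) // sum1_card.
Qed.

Lemma porbit_count_split s l A :
  porbit_count s l setT = porbit_count s l A + porbit_count s l (~: A).
Proof.
rewrite /porbit_count -(cardsID A [set z in setT | _]); congr (_ + _); apply: eq_card => z.
  by rewrite !inE andbC.
by rewrite !inE andbC.
Qed.

Lemma mem_porbit_stable t x : {in porbit t x, forall a, t a \in porbit t x}.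
Proof. by move=> _ /porbitP[i ->]; rewrite -permM -expgSr mem_porbit. Qed.

Lemma porbit_sub s A z : {in A, forall a, s a \in A} -> z \in A -> porbit s z \subset A.
Proof.
move=> sA zA; apply/subsetP => _ /porbitP[i ->].
by elim: i => [|i IH]; rewrite ?expg0 ?perm1 // expgSr permM sA.
Qed.

Lemma porbit_notin s A y z : {in A, forall a, s a \in A} -> y \notin A ->
  z \in porbit s y -> z \notin A.
Proof.
move=> sA yA zy; apply: contra yA => zA.
by apply: (subsetP (porbit_sub sA zA)); rewrite porbit_sym.
Qed.

Lemma porbit_eq_on s t A z : {in A, forall a, t a \in A} -> {in A, s =1 t} ->
  z \in A -> porbit s z = porbit t z.
Proof.
move=> tA stA zA.
have iterE i : (s ^+ i) z = (t ^+ i) z /\ (t ^+ i) z \in A.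
  elim: i => [|i [IH tiA]]; first by rewrite !expg0 !perm1.
  by rewrite !expgSr !permM IH stA // tA.
by apply/setP => y; apply/porbitP/porbitP => -[i ->]; exists i; case: (iterE i).
Qed.

Lemma porbit_count_compl s t A l : {in A, forall a, t a \in A} -> {in A, s =1 t} ->
    porbit_count s l setT = porbit_count t l setT ->
  porbit_count s l (~: A) = porbit_count t l (~: A).
Proof.
move=> tA stA; rewrite !(porbit_count_split _ _ A).
suff -> : porbit_count s l A = porbit_count t l A by move/addnI.
apply: eq_card => z; rewrite !inE; case zA: (z \in A) => //=.
by rewrite (porbit_eq_on tA stA zA).
Qed.

Lemma perm_extend (u v : seq T) : uniq u -> uniq v -> size u = size v ->
  exists p : {perm T}, map p u = v.
Proof.
elim: u v => [|x u IH] [|y v] //=; first by exists 1.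
move=> /andP[xu uu] /andP[yv uv] [/IH[]// p pu].
exists (p * tperm (p x) y); rewrite /= permM tpermL -[in RHS]pu; congr (_ :: _).
apply/eq_in_map => z zu; rewrite permM tpermD //.
  by rewrite (inj_eq perm_inj); apply: contraNneq xu => ->.
by apply: contraNneq yv => ->; rewrite -pu map_f.
Qed.

Lemma conj_step s t A x y : {in A, forall a, t a \in A} -> {in A, s =1 t} ->
    x \notin A -> y \notin A -> #|porbit s y| = #|porbit t x| ->
  exists p, {in A :|: porbit t x, s ^ p =1 t}.
Proof.
move=> tA stA xA yA lyx; set l := #|porbit t x|.
have sA : {in A, forall a, s a \in A} by move=> a aA; rewrite stA ?tA.
have uniq_orbit (u : {perm T}) w : {in A, forall a, u a \in A} -> w \notin A ->
    l = #|porbit u w| -> uniq (enum A ++ traject u w l).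
  move=> uA wA ->; rewrite cat_uniq enum_uniq uniq_traject_porbit andbT /=.
  apply/hasPn => z; rewrite -porbit_traject mem_enum; exact: porbit_notin.
have size_eq : size (enum A ++ traject s y l) = size (enum A ++ traject t x l).
  by rewrite !size_cat !size_traject.
have [p] := perm_extend (uniq_orbit _ _ sA yA (esym lyx)) (uniq_orbit _ _ tA xA erefl)
  size_eq.
move/eqP; rewrite map_cat eqseq_cat ?size_map // => /andP[/eqP pA /eqP pX].
have {}pA : {in A, forall a, p a = a}.
  have /eq_in_map pA' : map p (enum A) = map id (enum A) by rewrite map_id.
  by move=> a aA; apply: pA'; rewrite mem_enum.
have {}pX i : i < l -> p (iter i s y) = iter i t x.
  move=> il; have := congr1 (fun w => nth x w i) pX.
  by rewrite (nth_map y) ?size_traject // !nth_traject.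
exists p => z; rewrite inE => /orP[zA|].
  by rewrite -{1}(pA z zA) permJ stA // pA // tA.
rewrite porbit_traject => /trajectP[i il ->].
rewrite -[in LHS](pX i il) permJ -!iterS.
have [il'|li|->] := ltngtP i.+1 l; [exact: pX | by rewrite ltnNge il in li |].
rewrite /l -{1}lyx !iter_porbit; exact: (pX 0 (leq_ltn_trans (leq0n i) il)).
Qed.

Lemma conj_extend t A s : (forall l, porbit_count s l setT = porbit_count t l setT) ->
  {in A, forall a, t a \in A} -> {in A, s =1 t} -> exists h, t = s ^ h.
Proof.
have [k] := ubnP #|~: A|; elim: k A s => // k IH A s ltAk count_st tA stA.
have [x xA|noA] := pickP (mem (~: A)); last first.
  exists 1; rewrite conjg1; apply/permP => z; rewrite stA //.
  by move: (noA z); rewrite /= inE => /negbFE.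
move: xA; rewrite /= inE => xA; set X := porbit t x.
have [y yA lyx] : exists2 y, y \notin A & #|porbit s y| = #|X|.
  have : 0 < porbit_count t #|X| (~: A).
    by rewrite card_gt0; apply/set0Pn; exists x; rewrite !inE xA /=.
  rewrite -(porbit_count_compl tA stA) // card_gt0 => /set0Pn[y].
  by rewrite !inE => /andP[yA /eqP]; exists y.
have [p spt] := conj_step tA stA xA yA lyx.
suff [h ->] : exists h, t = (s ^ p) ^ h by exists (p * h); rewrite conjgM.
apply: (IH (A :|: X)).
- rewrite -ltnS (leq_trans _ ltAk) // ltnS proper_card // setCU.
  by apply/properP; split; [apply: subsetIl | exists x; rewrite !inE ?porbit_id /= ?andbF].
- by move=> l; rewrite porbit_countJ.
- move=> a; rewrite inE => /orP[/tA aA|aX]; first by rewrite inE aA.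
  by rewrite inE mem_porbit_stable ?orbT.
- exact: spt.
Qed.

Lemma conj_of_same_cycle_type s t : same_cycle_type s t -> exists h, t = s ^ h.
Proof.
move=> st; apply: (@conj_extend t set0) => [l|a|a]; rewrite ?inE //.
by rewrite !porbit_count_cycle_type; apply: perm_big.
Qed.

Lemma conj_tperm_fixed s a b : s a = a -> s b = b -> s ^ tperm a b = s.
Proof.
move=> sa sb; apply/conjg_fixP/commgP/commute_sym/commgP/conjg_fixP.
by rewrite tpermJ sa sb.
Qed.

Lemma even_conj_of_fixed s h : 1 < #|[set x | s x == x]| ->
  exists2 g, ~~ odd_perm g & s ^ g = s ^ h.
Proof.
case/card_gt1P => a [b [+ + ab]]; rewrite !inE => /eqP sa /eqP sb.
case h_odd: (odd_perm h); last by exists h; rewrite ?h_odd.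
exists (tperm a b * h); first by rewrite odd_mul_tperm ab h_odd.
by rewrite conjgM conj_tperm_fixed.
Qed.

End Conjugacy.

Section CrossingValue.
Variables (m n j : nat).
Hypothesis window_le : j + n <= m.+1.

Lemma val_prod_tperm_window K (i : 'I_m.+1) : K <= n./2 ->
  val ((\prod_(k < K) tperm (inord (j + k) : 'I_m.+1) (inord (j + n - 1 - k))) i)
  = if (j <= i < j + K) || (j + n - K <= i < j + n) then 2 * j + n - 1 - i else i.
Proof.
elim: K => [|K IH] leK; first by rewrite big_ord0 perm1; case: ifP => //; lia.
have ltKn : K.*2 < n by move: leK; lia.
rewrite big_ord_recr /= permM; set P := \prod_(k < K) _; set y := P i.
have {IH}yE := IH (ltnW leK); rewrite -/P -/y /= in yE.
have aE : val (inord (j + K) : 'I_m.+1) = j + K by apply: inordK; lia.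
have bE : val (inord (j + n - 1 - K) : 'I_m.+1) = j + n - 1 - K by apply: inordK; lia.
case: tpermP => [ya|yb|/eqP ya /eqP yb].
- by rewrite bE; move: yE; rewrite ya aE; case: ifP; case: ifP => //; lia.
- by rewrite aE; move: yE; rewrite yb bE; case: ifP; case: ifP => //; lia.
rewrite -(inj_eq val_inj) aE in ya; rewrite -(inj_eq val_inj) bE in yb.
by move: ya yb; rewrite /= yE; case: ifP; case: ifP => //; lia.
Qed.

Lemma crossing_val (i : 'I_m.+1) : ~~ odd n ->
  val (crossing m n j i) = if j <= i < j + n then 2 * j + n - 1 - i else i.
Proof.
move=> n_even; rewrite /crossing val_prod_tperm_window //.
have : n = (n./2).*2 by rewrite -[n in LHS]odd_double_half (negbTE n_even).
by case: ifP; case: ifP => //; lia.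
Qed.

End CrossingValue.

Section CrossingGroup.
Variables (m n : nat).
Hypotheses (n_ge2 : 2 <= n) (n_even : ~~ odd n) (m_ge : 2 * n - 2 <= m).

Local Notation pt i := (inord i : 'I_m.+1).
Local Notation G := <<crossings m n>>.

Lemma val_pt i : i <= m -> val (pt i) = i.
Proof. exact: inordK. Qed.

Lemma crossing_in j : j + n <= m.+1 -> crossing m n j \in G.
Proof.
move=> le_jn; apply/mem_gen/imsetP; exists (inord j : 'I_m.+2).
  by rewrite inE inordK //; lia.
by rewrite inordK //; lia.
Qed.

Lemma crossing_pt j i : j + n <= m.+1 -> i <= m ->
  crossing m n j (pt i) = pt (if j <= i < j + n then 2 * j + n - 1 - i else i).
Proof.
move=> le_jn le_im; apply: val_inj; rewrite crossing_val // val_pt //.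
by case: ifP => // win; rewrite val_pt //; lia.
Qed.

Lemma cyc3_crossing_in j a b c : j + n <= m.+1 -> a <= m -> b <= m -> c <= m ->
    ~~ (j <= a < j + n) -> ~~ (j <= b < j + n) -> j <= c < j + n ->
  cyc3 (pt a) (pt b) (pt c) \in G -> cyc3 (pt a) (pt b) (pt (2 * j + n - 1 - c)) \in G.
Proof.
move=> le_jn am bm cm /negbTE aj /negbTE bj cj abcG.
have := groupJ abcG (crossing_in le_jn).
by rewrite cyc3J !crossing_pt // aj bj cj.
Qed.

Lemma val_tperm_pt a b (z : 'I_m.+1) : a <= m -> b <= m ->
  val (tperm (pt a) (pt b) z) = if val z == a then b else if val z == b then a else val z.
Proof.
move=> am bm; case: tpermP => [->|->|/eqP za /eqP zb]; rewrite ?val_pt ?eqxx //.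
  by case: eqP => // ->.
by rewrite -(inj_eq val_inj) val_pt // in za; rewrite -(inj_eq val_inj) val_pt // in zb;
  rewrite (negbTE za) (negbTE zb).
Qed.

Lemma crossing_commutator_cyc3 :
  (crossing m n 0 * crossing m n (n - 1)) ^+ 2 = cyc3 (pt 0) (pt (2 * n - 2)) (pt (n - 1)).
Proof.
apply/permP => z; apply: val_inj.
rewrite expgS expg1 /cyc3 !permM !val_tperm_pt ?val_tperm_pt ?crossing_val; try lia.
by have := ltn_ord z; repeat case: ifP => /=; try lia.
Qed.

Lemma eq_pt a b : a <= m -> b <= m -> (pt a == pt b) = (a == b).
Proof. by move=> am bm; rewrite -(inj_eq val_inj) !val_pt. Qed.

Lemma cyc3_0_top_in i : 1 <= i <= 2 * n - 3 -> cyc3 (pt 0) (pt (2 * n - 2)) (pt i) \in G.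
Proof.
have [h n_half] : exists h, (n = 2 * h)%N.
  by exists n./2; rewrite -[n in LHS]odd_double_half (negbTE n_even) -mul2n.
pose C i := cyc3 (pt 0) (pt (2 * n - 2)) (pt i) \in G.
have base : C (n - 1).
  by rewrite /C -crossing_commutator_cyc3 groupX // groupM // crossing_in //; lia.
(* Even points 2j are images of n-1 under r_j; the odd points below (above) n-1
   are reflections of even ones in the window of r_1 (of r_{n-2}). *)
have crossC j c : 1 <= j <= n - 2 -> j <= c < j + n -> C c -> C (2 * j + n - 1 - c)%N.
  by move=> jn cj; apply: cyc3_crossing_in; lia.
have evenC j : 1 <= j <= n - 2 -> C (2 * j)%N.
  move=> jn; have -> : (2 * j = 2 * j + n - 1 - (n - 1))%N by lia.
  by apply: crossC; [lia | lia | exact: base].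
have [q [->|->]] : exists q, (i = 2 * q \/ i = 2 * q + 1)%N by exists (i %/ 2); lia.
  by move=> i_range; apply: evenC; lia.
move=> i_range.
have [lt_qn|gt_qn|->] := ltngtP (2 * q + 1) (n - 1); last exact: base.
  have -> : (2 * q + 1 = 2 * 1 + n - 1 - 2 * (h - q))%N by lia.
  by apply: crossC; [lia | lia | apply: evenC; lia].
have -> : (2 * q + 1 = 2 * (n - 2) + n - 1 - 2 * (3 * h - 3 - q))%N by lia.
by apply: crossC; [lia | lia | apply: evenC; lia].
Qed.

Lemma cyc3_0_1_in z : 2 <= z <= m -> cyc3 (pt 0) (pt 1) (pt z) \in G.
Proof.
have [k] := ubnP z; elim: k z => // k IH z ltzk z_range.
have [z_le|z_gt] := leqP z (2 * n - 2).
  apply: (@cyc3_pivot_in _ _ [pred w : 'I_m.+1 | 1 <= w <= 2 * n - 2] _ (pt (2 * n - 2)));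
    rewrite ?inE ?eq_pt ?val_pt //; try lia.
  move=> w /andP[w1 w2] _; have wm : w <= m := ltn_ord w.
  rewrite -[w]inord_val eq_pt // => wtop.
  by apply: cyc3_0_top_in; lia.
have -> : (z = 2 * (z + 1 - n) + n - 1 - (z + 1 - n))%N by lia.
by apply: cyc3_crossing_in; try lia; apply: IH; lia.
Qed.

Lemma crossings_cyc3_in (a b c : 'I_m.+1) : a != b -> b != c -> a != c -> cyc3 a b c \in G.
Proof.
apply: (@cyc3_star_in _ _ (pt 0) (pt 1)); first by rewrite eq_pt //; lia.
have m_gt0 : 0 < m by lia.
move=> z; have zm : z <= m := ltn_ord z.
by rewrite -[z]inord_val !eq_pt // => z0 z1; apply: cyc3_0_1_in; lia.
Qed.

Lemma crossings_even_perm_in h : ~~ odd_perm h -> h \in G.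
Proof. exact: (even_perm_in (G := <<crossings m n>>%G) crossings_cyc3_in). Qed.

End CrossingGroup.

Theorem lemma2p6 (n N : nat) (hn2 : 2 <= n) (hnev : ~~ odd n) (hN : 1 <= N)
  (tau : {perm 'I_(N + 3 * n - 4).+1}) (htau : nonfix_size tau <= N)
  (sigma : {perm 'I_(N + 3 * n - 4).+1}) (hsig : same_cycle_type sigma tau) :
  exists2 g, g \in << crossings (N + 3 * n - 4) n >> &
    sigma = tau ^ g.
Proof.
have [h ->] : exists h, sigma = tau ^ h.
  by apply: conj_of_same_cycle_type; rewrite /same_cycle_type perm_sym.
have two_fixed : 1 < #|[set x | tau x == x]|.
  have := cardsC [set x | tau x == x]; rewrite card_ord.
  have -> : ~: [set x | tau x == x] = [set x | tau x != x] by apply/setP => x; rewrite !inE.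
  by move: htau; rewrite /nonfix_size; lia.
have [g g_even tau_g] := even_conj_of_fixed h two_fixed.
by exists g; rewrite ?tau_g // crossings_even_perm_in //; lia.
Qed.
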